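(* For every $r\geq 1$ there exists a polynomial $p_r$ of degree at most $2r-2$ such that for all $k\geq 3$, $$M(k;r)\leq \frac{k^{2r-1}}{(2r-1)!}+p_r(k).$$
   Context: A sequence of positive integers $w_1<\dots<w_n$ is an ascending wave if $w_{i+1}-w_i \geq w_i-w_{i-1}$ for $2\le i\le n-1$. $AW(k;r)$ is the least $N$ such that every $r$-coloring of $\{1,\dots,N\}$ contains a $k$-term monochromatic ascending wave. For $k\ge 2$ and $M\ge AW(k;r)$: for an $r$-coloring $\psi$ of $\{1,\dots,M\}$, $\delta_k(\psi)$ is the minimum of $w_k-w_{k-1}$ over all monochromatic $k$-term ascending waves $(w_1,\dots,w_k)$ under $\psi$, and $\Delta^M(k;r)$ is the maximum of $\delta_k(\psi)$ over all $r$-colorings $\psi$ of $\{1,\dots,M\}$. The integers $M(k;r)$ are defined by $M(k;1)=k$, $M(1;r)=1$, $M(2;r)=r+1$, and for $k\ge3$, $r\ge2$, $M(k;r)=M(k-1;r)+\Delta^{M(k-1;r)}(k-1;r)+M(k;r-1)-1$; one has $M(k;r)\ge AW(k;r)$ so these quantities are defined. *)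

From mathcomp Require Import all_boot all_order all_algebra.
Set Implicit Arguments. Unset Strict Implicit. Unset Printing Implicit Defensive.

(* A sequence of integers w_1 < ... < w_n is an ascending wave if
   w_{i+1} - w_i >= w_i - w_{i-1} for 2 <= i <= n-1 (0-indexed below). *)
Definition ascending_wave (s : seq nat) : bool :=
  sorted ltn s &&
  [forall i : 'I_(size s),
     (1 <= i)%N && (i.+1 < size s)%N ==>
     (nth 0 s i - nth 0 s i.-1 <= nth 0 s i.+1 - nth 0 s i)%N].

(* An r-coloring of {1,...,M}: the element x : 'I_M stands for the integer x+1. *)
Definition coloring (M r : nat) := {ffun 'I_M -> 'I_r}.

Definition wave_of M (t : seq 'I_M) : seq nat := [seq (val x).+1 | x <- t].

Definition mono_wave M r (psi : coloring M r) k (t : k.-tuple 'I_M) : bool :=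
  ascending_wave (wave_of t) &&
  [forall i : 'I_k, forall j : 'I_k, psi (tnth t i) == psi (tnth t j)].

Definition last_gap M k (t : k.-tuple 'I_M) : nat :=
  (nth 0 (wave_of t) k.-1 - nth 0 (wave_of t) k.-2)%N.

(* The default value M is only returned when there is no such wave,
   which never happens for M >= AW(k;r) (the only case where it is used). *)
Definition delta_k k M r (psi : coloring M r) : nat :=
  \big[minn/M]_(t : k.-tuple 'I_M | mono_wave psi t) last_gap t.

Definition Delta M k r : nat :=
  \max_(psi : coloring M r) delta_k k psi.

Fixpoint Mkr (k : nat) : nat -> nat :=
  match k with
  | 0 => fun _ => 0
  | 1 => fun _ => 1
  | 2 => fun r => r.+1
  | (k'.+1) as k0 =>
      fix Mr (r : nat) : nat :=
        match r with
        | 0 => 0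
        | 1 => k0
        | r'.+1 => (Mkr k' r + Delta (Mkr k' r) k' r + Mr r' - 1)%N
        end
  end.

From mathcomp Require Import all_boot all_order all_algebra.
From mathcomp Require Import zify ring.

(* Greedy induction on r and k: in an (r+1)-colouring of an interval of length
   M(k;r+1) + Delta + M(k+1;r) - 1, the first M(k;r+1) points carry a
   monochromatic k-wave ending at x with last gap g <= Delta = Delta^{M(k;r+1)}(k;r+1).
   Either one of the next M(k+1;r) points from x + g on has the colour of x and
   extends the wave, or that window misses this colour and so contains a
   monochromatic (k+1)-wave in the remaining r colours.  Both outcomes have last
   gap at most Delta + M(k+1;r), which gives the recursion for Delta as well.
   Pascal's rule then yields M(k;r) <= C(k+2r-2, 2r-1) = k(k+1)...(k+2r-2)/(2r-1)!,
   a polynomial in k with leading term k^(2r-1)/(2r-1)!. *)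

Set Implicit Arguments.
Unset Strict Implicit.
Unset Printing Implicit Defensive.

Lemma ascending_waveP s :
  reflect (sorted ltn s /\ forall i, 0 < i -> i.+1 < size s ->
             nth 0 s i - nth 0 s i.-1 <= nth 0 s i.+1 - nth 0 s i)
          (ascending_wave s).
Proof.
apply: (iffP andP) => -[sorted_s gaps]; split=> //.
  move=> i i_gt0 lt_i_s; have /implyP := forallP gaps (Ordinal (ltnW lt_i_s)).
  by rewrite /= i_gt0 lt_i_s; apply.
by apply/forallP => i; apply/implyP => /andP[]; apply: gaps.
Qed.

Lemma ascending_wave_shift c s : ascending_wave (map (addn c) s) = ascending_wave s.
Proof.
have sorted_shift : sorted ltn (map (addn c) s) = sorted ltn s.
  by apply: mono_sorted => x y; rewrite /= ltn_add2l.
apply/ascending_waveP/ascending_waveP; rewrite sorted_shift size_map => -[sorted_s gaps];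
  split=> // i i_gt0 lt_i_s; have := gaps i i_gt0 lt_i_s; rewrite !(nth_map 0) //; lia.
Qed.

Definition final_gap (s : seq nat) := nth 0 s (size s).-1 - nth 0 s (size s).-2.

Lemma final_gap_shift c s : final_gap (map (addn c) s) = final_gap s.
Proof.
rewrite /final_gap size_map; case: s => [|x s] //=.
by rewrite -map_cons !(nth_map 0) //=; lia.
Qed.

Lemma final_gap_rcons s y : 0 < size s -> final_gap (rcons s y) = y - last 0 s.
Proof.
case: s => [|z s] // _; rewrite /final_gap size_rcons /= nth_rcons /= ltnn eqxx.
rewrite (last_nth 0) /=; case E: (size s) => [|n] //=.
by rewrite nth_rcons E ltnSn.
Qed.

Lemma final_gap_gt0 s : sorted ltn s -> 2 <= size s -> 0 < final_gap s.
Proof.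
move=> sorted_s size_s; rewrite /final_gap subn_gt0.
by apply: (sorted_ltn_nth ltn_trans 0 sorted_s); rewrite ?inE; lia.
Qed.

Lemma final_gap_le s a L : all (fun x => a <= x < a + L) s -> final_gap s <= L.
Proof.
case: s => [|y s] // /allP s_in; rewrite /final_gap /=.
have := s_in _ (@mem_nth _ 0 (y :: s) (size s) (ltnSn _)).
have lt_s : (size s).-1 < size (y :: s) by rewrite /=; lia.
by have := s_in _ (mem_nth 0 lt_s) => /=; lia.
Qed.

Lemma ascending_wave_rcons s x : ascending_wave s -> 0 < size s ->
  final_gap s <= x - last 0 s -> last 0 s < x -> ascending_wave (rcons s x).
Proof.
move=> /ascending_waveP[sorted_s gaps] s_gt0 gap_x last_x.
apply/ascending_waveP; rewrite size_rcons; split.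
  case: s sorted_s last_x {gaps gap_x s_gt0} => [|y s] //= sorted_s last_x.
  by rewrite rcons_path sorted_s.
move=> i i_gt0 lt_i_s; rewrite !nth_rcons (_ : i.-1 < size s); last lia.
case: (ltngtP i.+1 (size s)) => [lt_i1|gt_i1|eq_i1]; first by have := gaps i i_gt0 lt_i1; lia.
  lia.
have last_i : last 0 s = nth 0 s i by rewrite (last_nth 0) -eq_i1.
move: gap_x; rewrite /final_gap -eq_i1 last_i.
by case: i i_gt0 lt_i_s eq_i1 last_i => // i _ _ _ _ /=; lia.
Qed.

Definition monochromatic (f : nat -> nat) (s : seq nat) := {in s &, forall x y, f x = f y}.

(* [wave_forced k r L B] says AW(k;r) <= L and, by [Delta_le_gap], Delta^L(k;r) <= B. *)
Definition wave_forced k r L B := forall (f : nat -> nat) a,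
  (forall x, a <= x < a + L -> f x < r) ->
  exists s, [/\ size s = k, ascending_wave s, all (fun x => a <= x < a + L) s,
                monochromatic f s & final_gap s <= B].

Lemma wave_forced_weaken k r L B B' : B <= B' -> wave_forced k r L B -> wave_forced k r L B'.
Proof.
move=> le_B forced f a f_lt; have [s [? ? ? ? gap_s]] := forced f a f_lt.
by exists s; split=> //; apply: leq_trans le_B.
Qed.

Lemma wave_forced_length_gt0 k r L B : wave_forced k r L B -> 0 < k -> 0 < r -> 0 < L.
Proof.
move=> forced k_gt0 r_gt0.
have [s [size_s _ /allP s_in _ _]] := forced (fun=> 0) 0 (fun _ _ => r_gt0).
case: s size_s s_in => [|y s] /= size_s s_in; first by rewrite -size_s in k_gt0.
by have := s_in y; rewrite inE eqxx => /(_ isT); lia.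
Qed.

Lemma wave_forced_1 r : wave_forced 1 r 1 1.
Proof.
move=> f a _; exists [:: a]; split=> //; last by rewrite /final_gap /= subnn.
- by apply/ascending_waveP; split=> // -[|i].
- by rewrite /= leqnn addn1 ltnSn.
- by move=> x y; rewrite !inE => /eqP-> /eqP->.
Qed.

Lemma wave_forced_one_color k : wave_forced k 1 k k.
Proof.
move=> f a f_lt; have in_iota : all (fun x => a <= x < a + k) (iota a k).
  by apply/allP => x; rewrite mem_iota.
exists (iota a k); split=> //; last exact: final_gap_le in_iota.
- by rewrite size_iota.
- apply/ascending_waveP; split; first exact: iota_ltn_sorted.
  by move=> i i_gt0; rewrite size_iota => lt_i_k; rewrite !nth_iota; lia.
- move=> x y; rewrite !mem_iota => /f_lt fx_lt /f_lt fy_lt; lia.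
Qed.

(* Pigeonhole among r.+1 consecutive points. *)
Lemma wave_forced_2 r : wave_forced 2 r r.+1 r.+1.
Proof.
move=> f a f_lt; have : ~~ uniq (map f (iota a r.+1)).
  apply/negP => uniq_f.
  have : size (map f (iota a r.+1)) <= size (iota 0 r).
    apply: uniq_leq_size uniq_f _ => y /mapP[x]; rewrite mem_iota => x_in ->.
    by rewrite mem_iota add0n; apply: f_lt.
  by rewrite size_map !size_iota ltnn.
case/(uniqPn 0) => i [j [lt_ij]]; rewrite size_map size_iota => lt_j.
rewrite !(nth_map 0) ?size_iota ?nth_iota; try lia.
move=> f_ij; have in_a : all (fun x => a <= x < a + r.+1) [:: a + i; a + j].
  by rewrite /= !andbT; apply/andP; split; lia.
exists [:: a + i; a + j]; split=> //; last exact: final_gap_le in_a.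
- by apply/ascending_waveP; split=> [|[|[|l]]] //=; rewrite ltn_add2l lt_ij.
- by move=> x y; rewrite !inE => /orP[]/eqP-> /orP[]/eqP->.
Qed.

Lemma wave_ofE M (t : seq 'I_M) : wave_of t = map (addn 1) (map val t).
Proof. by rewrite /wave_of -map_comp; apply: eq_map => x /=; rewrite add1n. Qed.

Lemma last_gap_final_gap M k (t : k.-tuple 'I_M) : last_gap t = final_gap (wave_of t).
Proof. by rewrite /last_gap /final_gap /wave_of size_map size_tuple. Qed.

Lemma last_gap_le M k (t : k.-tuple 'I_M) : last_gap t <= M.
Proof.
rewrite /last_gap; apply: leq_trans (leq_subr _ _) _.
case: (ltnP k.-1 (size (wave_of t))) => [lt_t|]; last by move/(nth_default 0)->.
by have /mapP[x _ ->] := mem_nth 0 lt_t; apply: ltn_ord.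
Qed.

Lemma delta_k_le k M r (psi : coloring M r) (t : k.-tuple 'I_M) :
  mono_wave psi t -> delta_k k psi <= last_gap t.
Proof.
move=> mono_t; rewrite /delta_k.
have : t \in index_enum (k.-tuple 'I_M) by rewrite mem_index_enum.
elim: (index_enum _) => // u s IH; rewrite inE big_cons => /orP[/eqP<-|t_s].
  by rewrite mono_t geq_minl.
by case: (mono_wave psi u); [apply: leq_trans (geq_minr _ _) (IH t_s) | apply: IH].
Qed.

Lemma delta_k_attained k M r (psi : coloring M r) (t0 : k.-tuple 'I_M) : mono_wave psi t0 ->
  exists t : k.-tuple 'I_M, mono_wave psi t /\ last_gap t <= delta_k k psi.
Proof.
move=> mono_t0; case: (arg_minnP (fun t : k.-tuple 'I_M => last_gap t) mono_t0) => t mono_t t_min.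
exists t; split=> //; rewrite /delta_k; elim/big_ind: _ => [|x y le_x le_y|]; last exact: t_min.
  exact: last_gap_le.
by rewrite leq_min le_x le_y.
Qed.

Lemma Delta_le M k r : Delta M k r <= M.
Proof.
apply/bigmax_leqP => psi _; rewrite /delta_k.
elim/big_ind: _ => // [x y le_x _|t _]; [exact: leq_trans (geq_minl _ _) le_x | exact: last_gap_le].
Qed.

Section IntervalColoring.

Variables (M r : nat) (psi : coloring M.+1 r) (f : nat -> nat) (a : nat).
Hypothesis psi_f : forall i : 'I_M.+1, val (psi i) = f (a + i).

Lemma mono_wave_interval k (t : k.-tuple 'I_M.+1) : mono_wave psi t ->
  exists s, [/\ size s = k, ascending_wave s, all (fun x => a <= x < a + M.+1) s,
     monochromatic f s & final_gap s = last_gap t].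
Proof.
case/andP=> wave_t /forallP mono_t; exists (map (addn a) (map val t)); split.
- by rewrite !size_map size_tuple.
- by rewrite ascending_wave_shift -(ascending_wave_shift 1) -wave_ofE.
- by apply/allP => _ /mapP[_ /mapP[i _ ->] ->]; rewrite leq_addr ltn_add2l ltn_ord.
- move=> _ _ /mapP[_ /mapP[i i_t ->] ->] /mapP[_ /mapP[j j_t ->] ->].
  case/tnthP: i_t => i' ->; case/tnthP: j_t => j' ->.
  by rewrite -!psi_f; have /forallP/(_ j')/eqP-> := mono_t i'.
- by rewrite last_gap_final_gap wave_ofE !final_gap_shift.
Qed.

Lemma interval_mono_wave k s : size s = k -> ascending_wave s ->
  all (fun x => a <= x < a + M.+1) s -> monochromatic f s ->
  exists t : k.-tuple 'I_M.+1, mono_wave psi t /\ last_gap t = final_gap s.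
Proof.
move=> size_s wave_s /allP s_in mono_s.
pose t := map (fun x => inord (x - a) : 'I_M.+1) s.
have val_t : map val t = map (subn^~ a) s.
  by rewrite -map_comp; apply/eq_in_map => x /s_in x_in /=; rewrite inordK //; lia.
have s_shift : s = map (addn a) (map (subn^~ a) s).
  by rewrite -map_comp -{1}(map_id s); apply/eq_in_map => x /s_in x_in /=; lia.
have size_t : size t == k by rewrite size_map size_s.
exists (Tuple size_t); split; last first.
  by rewrite last_gap_final_gap wave_ofE final_gap_shift /= val_t {2}s_shift final_gap_shift.
apply/andP; split.
  by rewrite wave_ofE /= val_t ascending_wave_shift -(ascending_wave_shift a) -s_shift.
apply/forallP => i; apply/forallP => j; apply/eqP/val_inj; rewrite !psi_f.
have /mapP[x x_s ->] : tnth (Tuple size_t) i \in t by apply: mem_tnth.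
have /mapP[y y_s ->] : tnth (Tuple size_t) j \in t by apply: mem_tnth.
have := s_in x x_s; have := s_in y y_s => /= y_in x_in.
by rewrite !inordK ?subnKC; [apply: mono_s | lia ..].
Qed.

End IntervalColoring.

Lemma wave_forced_Delta k r M B : 0 < M -> wave_forced k r M B -> wave_forced k r M (Delta M k r).
Proof.
case: M => // M _ forced f a f_lt.
have f_lt' (i : 'I_M.+1) : f (a + i) < r by apply: f_lt; rewrite leq_addr ltn_add2l ltn_ord.
pose psi : coloring M.+1 r := [ffun i => Ordinal (f_lt' i)].
have psi_f i : val (psi i) = f (a + i) by rewrite ffunE.
have [s0 [size_s0 wave_s0 s0_in mono_s0 _]] := forced f a f_lt.
have [t0 [mono_t0 _]] := interval_mono_wave psi_f size_s0 wave_s0 s0_in mono_s0.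
have [t [mono_t gap_t]] := delta_k_attained mono_t0.
have [s [size_s wave_s s_in mono_s gap_s]] := mono_wave_interval psi_f mono_t.
exists s; split=> //; rewrite gap_s; apply: leq_trans gap_t _.
exact: (leq_bigmax_cond psi).
Qed.

Lemma Delta_le_gap k r M B : 0 < M -> wave_forced k r M B -> Delta M k r <= B.
Proof.
case: M => // M _ forced; apply/bigmax_leqP => psi _.
pose f x := val (psi (inord x)).
have psi_f (i : 'I_M.+1) : val (psi i) = f (0 + i) by rewrite /f add0n inord_val.
have [s [size_s wave_s s_in mono_s gap_s]] := forced f 0 (fun x _ => ltn_ord _).
have [t [mono_t gap_t]] := interval_mono_wave psi_f size_s wave_s s_in mono_s.
by apply: leq_trans (delta_k_le mono_t) _; rewrite gap_t.
Qed.

Lemma wave_forced_skip_color k r L B c f a : c <= r -> wave_forced k r L B ->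
  (forall x, a <= x < a + L -> f x < r.+1 /\ f x != c) ->
  exists s, [/\ size s = k, ascending_wave s, all (fun x => a <= x < a + L) s,
                monochromatic f s & final_gap s <= B].
Proof.
move=> le_c_r forced f_ok; pose f' x := if f x < c then f x else (f x).-1.
have f'_lt x : a <= x < a + L -> f' x < r.
  by case/f_ok => f_lt /eqP f_c; rewrite /f'; case: (ltnP (f x) c); lia.
have [s [size_s wave_s /allP s_in mono_s gap_s]] := forced f' a f'_lt.
exists s; split=> //; first exact/allP.
move=> x y x_s y_s; have := mono_s x y x_s y_s.
have [_ /eqP fx_c] := f_ok x (s_in x x_s); have [_ /eqP fy_c] := f_ok y (s_in y y_s).
rewrite /f'; case: (ltnP (f x) c); case: (ltnP (f y) c); lia.
Qed.

Lemma wave_forced_step k r M1 B1 M2 : 2 <= k -> 0 < M1 -> 0 < M2 ->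
  wave_forced k r.+1 M1 B1 -> wave_forced k.+1 r M2 M2 ->
  wave_forced k.+1 r.+1 (M1 + Delta M1 k r.+1 + M2 - 1) (Delta M1 k r.+1 + M2).
Proof.
move=> k_ge2 M1_gt0 M2_gt0 forced1 forced2 f a f_lt.
have f_lt1 x : a <= x < a + M1 -> f x < r.+1 by move=> x_in; apply: f_lt; lia.
have [s [size_s wave_s s_in mono_s gap_s]] := wave_forced_Delta M1_gt0 forced1 f_lt1.
have s_gt0 : 0 < size s by lia.
have last_s : last 0 s \in s.
  by case: s s_gt0 {size_s wave_s s_in mono_s gap_s} => // y s _; apply: mem_last.
have last_in := allP s_in _ last_s; move: last_in => /= last_in.
have gap_gt0 : 0 < final_gap s by apply: final_gap_gt0; [case/andP: wave_s | lia].
set x := last 0 s in last_s last_in; set g := final_gap s in gap_s gap_gt0.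
case: (boolP (has (fun y => f y == f x) (iota (x + g) M2))) => [|/hasPn no_fx].
  case/hasP => y; rewrite mem_iota => y_in /eqP fy_fx.
  exists (rcons s y); split.
  - by rewrite size_rcons size_s.
  - by apply: ascending_wave_rcons => //; rewrite -/x -/g; lia.
  - rewrite all_rcons; apply/andP; split; first lia.
    by apply: sub_all s_in => z /=; lia.
  - move=> u v; rewrite !mem_rcons !inE.
    by case/orP=> [/eqP->|u_s] /orP[/eqP->|v_s] //; rewrite ?fy_fx; apply: mono_s.
  - by rewrite final_gap_rcons // -/x; lia.
have [||s' [size_s' wave_s' s'_in mono_s' _]] :=
  @wave_forced_skip_color _ _ _ _ (f x) f (x + g) _ forced2.
- by rewrite -ltnS f_lt1.
- move=> z z_in; split; first by apply: f_lt; lia.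
  by apply: no_fx; rewrite mem_iota.
exists s'; split=> //; last by apply: leq_trans (final_gap_le s'_in) _; lia.
by apply: sub_all s'_in => z /=; lia.
Qed.

Lemma Mkr1 k : 0 < k -> Mkr k 1 = k.
Proof. by case: k => [|[|[|k]]]. Qed.

Lemma MkrS k r : 2 <= k -> 0 < r ->
  Mkr k.+1 r.+1 = Mkr k r.+1 + Delta (Mkr k r.+1) k r.+1 + Mkr k.+1 r - 1.
Proof. by case: k => [|[|k]] // _; case: r. Qed.

Lemma wave_forced_Mkr r k : 0 < r -> 0 < k -> wave_forced k r (Mkr k r) (Mkr k r).
Proof.
elim: r k => // r IHr k _; elim: k => // k IHk _.
case: k IHk => [|[|k]] IHk; [exact: wave_forced_1 | exact: wave_forced_2 |].
case: r IHr IHk => [|r] IHr IHk; first by rewrite Mkr1 //; apply: wave_forced_one_color.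
have forced1 := IHk isT; have forced2 := IHr k.+3 isT isT.
have M1_gt0 := wave_forced_length_gt0 forced1 isT isT.
have M2_gt0 := wave_forced_length_gt0 forced2 isT isT.
rewrite MkrS //.
by apply: (wave_forced_weaken _ (wave_forced_step _ M1_gt0 M2_gt0 forced1 forced2)); lia.
Qed.

Lemma Delta_MkrS k r : 2 <= k -> 0 < r ->
  Delta (Mkr k.+1 r.+1) k.+1 r.+1 <= Delta (Mkr k r.+1) k r.+1 + Mkr k.+1 r.
Proof.
move=> k_ge2 r_gt0.
have forced1 := wave_forced_Mkr (ltn0Sn r) (ltnW k_ge2).
have forced2 := wave_forced_Mkr r_gt0 (ltn0Sn k).
have M1_gt0 := wave_forced_length_gt0 forced1 (ltnW k_ge2) isT.
have M2_gt0 := wave_forced_length_gt0 forced2 isT r_gt0.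
apply: Delta_le_gap; first by rewrite MkrS //; lia.
by rewrite MkrS //; apply: wave_forced_step forced1 forced2.
Qed.

Lemma binomial_majorant (a d b : nat -> nat) m :
  a 2 <= m.+3 -> d 2 <= m.+2 ->
  (forall k, 2 <= k -> b k.+1 <= 'C(k + m, m)) ->
  (forall k, 2 <= k -> d k.+1 <= d k + b k.+1) ->
  (forall k, 2 <= k -> a k.+1 <= a k + d k + b k.+1) ->
  forall k, 2 <= k -> a k <= 'C(k + m.+1, m.+2) /\ d k <= 'C(k + m, m.+1).
Proof.
move=> a2 d2 b_le d_rec a_rec; elim=> // k IHk k_ge1.
case: (ltnP k 2) => k_ge2.
  have -> : k = 1 by lia.
  by rewrite (_ : 2 + m.+1 = m.+3) // (_ : 2 + m = m.+2) // !binSn.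
have [a_le d_le] := IHk k_ge2.
have := b_le k k_ge2; have := d_rec k k_ge2; have := a_rec k k_ge2.
move: a_le d_le; rewrite !addSn !addnS !binS; lia.
Qed.

Lemma Mkr_le_binomial r k : 2 <= k -> Mkr k r.+1 <= 'C(k + r.*2, r.*2.+1).
Proof.
elim: r k => [|r IHr] k k_ge2; first by rewrite Mkr1 ?addn0 ?bin1 //; lia.
pose a k := Mkr k r.+2; pose d k := Delta (a k) k r.+2.
rewrite doubleS; apply: (proj1 (@binomial_majorant a d (Mkr^~ r.+1) r.*2.+1 _ _ _ _ _ k k_ge2)).
- by rewrite /a /=; lia.
- by rewrite /d; apply: leq_trans (Delta_le _ _ _) _; rewrite /a /=; lia.
- by move=> j j_ge2; rewrite -addSnnS; apply: IHr; lia.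
- by move=> j j_ge2; apply: Delta_MkrS.
- by move=> j j_ge2; rewrite /d /a MkrS //; lia.
Qed.

Lemma prod_addn_ffact k n : \prod_(i < n) (k + i) = (k + n).-1 ^_ n.
Proof.
elim: n => [|n IHn]; first by rewrite big_ord0 ffactn0.
by rewrite big_ord_recr /= IHn ffactnS mulnC (_ : (k + n.+1).-1 = k + n) //; lia.
Qed.

Import Order.TTheory GRing.Theory Num.Theory.
Local Open Scope ring_scope.

Lemma size_prod_XaddC_subXn (R : comNzRingType) n :
  (size (\prod_(i < n) ('X + (i%:R)%:P) - 'X^n : {poly R})%R <= n)%N.
Proof.
elim: n => [|n IHn]; first by rewrite big_ord0 expr0 subrr size_poly0.
have -> : (\prod_(i < n.+1) ('X + (i%:R)%:P) - 'X^(n.+1) : {poly R})%R =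
    ((\prod_(i < n) ('X + (i%:R)%:P) - 'X^n) * ('X + (n%:R)%:P) + (n%:R : R) *: 'X^n)%R.
  by rewrite big_ord_recr /= exprSr -mul_polyC; ring.
apply: leq_trans (size_polyD _ _) _; rewrite geq_max.
apply/andP; split; last by apply: leq_trans (size_scale_leq _ _) _; rewrite size_polyXn.
apply: leq_trans (size_polyMleq _ _) _; rewrite -subn1 leq_subLR.
by apply: leq_trans (leq_add IHn (eq_leq (size_XaddC _))) _; rewrite add1n addn2.
Qed.

Lemma natr_bin_horner (R : numFieldType) k n :
  ('C(k + n, n.+1)%:R : R) = (\prod_(i < n.+1) ('X + (i%:R)%:P)).[k%:R] / (n.+1)`!%:R.
Proof.
have fact_neq0 : ((n.+1)`!%:R : R) != 0 by rewrite pnatr_eq0 -lt0n fact_gt0.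
apply: (mulIf fact_neq0); rewrite mulfVK // -natrM bin_ffact.
rewrite (_ : k + n = (k + n.+1).-1)%N; last lia.
rewrite -prod_addn_ffact natr_prod horner_prod.
by apply: eq_bigr => i _; rewrite hornerD hornerX hornerC natrD.
Qed.

Theorem lemma1p4 (R : realFieldType) (r : nat) : (1 <= r)%N ->
  exists p : {poly R},
    (size p <= (2 * r - 2).+1)%N /\
    forall k : nat, (3 <= k)%N ->
      (Mkr k r)%:R <= (k%:R) ^+ (2 * r - 1) / ((2 * r - 1)`!)%:R + p.[k%:R].
Proof.
case: r => // r _.
have -> : (2 * r.+1 - 1 = r.*2.+1)%N by lia.
have -> : ((2 * r.+1 - 2).+1 = r.*2.+1)%N by lia.
set n := r.*2.+1; set P := \prod_(i < n) ('X + (i%:R)%:P) : {poly R}.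
exists ((n`!%:R)^-1 *: (P - 'X^n)); split.
  exact: leq_trans (size_scale_leq _ _) (size_prod_XaddC_subXn _ _).
move=> k k_ge3; apply: le_trans (_ : ('C(k + r.*2, n))%:R <= _).
  by rewrite ler_nat; apply: Mkr_le_binomial; lia.
rewrite natr_bin_horner hornerZ hornerD hornerN hornerXn.
by rewrite -/n -/P [_^-1 * _]mulrC -mulrDl addrC subrK.
Qed.
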